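(* Consider the graphs $K^{h}_{n}$ ($3\le h\le n-1$), $K^{s+t}_{n}$ ($s,t\ge 2$, $n=s+t$) and $K^{s,t}_{n}$ ($s,t\ge2$, $n=s+t-1$). No two non-isomorphic graphs among all graphs of these three types are $D$-cospectral.
   Context: For a connected graph $G$, the distance matrix $D(G)$ has as $(i,j)$-entry the distance between the $i$-th and $j$-th vertices; two graphs are $D$-cospectral if their distance matrices have the same spectrum. $K^{h}_{n}$: the graph on $n$ vertices obtained from $K_h$ by attaching $n-h$ pendant edges to one vertex of $K_h$. $K^{s+t}_{n}$: the graph obtained from disjoint $K_s$ and $K_t$ by adding one edge joining a vertex of $K_s$ to a vertex of $K_t$. $K^{s,t}_{n}$: the graph obtained from disjoint $K_s$ and $K_t$ by identifying a vertex of $K_s$ with a vertex of $K_t$. *)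

From HB Require Import structures.
From mathcomp Require Import all_boot all_order all_algebra.
Unset Printing Implicit Defensive.
Import GRing.Theory.

Record sgraph := SGraph { nv : nat; adj : rel 'I_nv }.

Definition reach (G : sgraph) (k : nat) (x : 'I_(nv G)) : {set 'I_(nv G)} :=
  iter k (fun B : {set 'I_(nv G)} =>
            B :|: [set z | [exists y in B, adj G y z]]) [set x].

(* graph distance: least k with y within k steps of x (for connected graphs
   this is < nv G, so searching k in [0, nv G) suffices) *)
Definition dist (G : sgraph) (x y : 'I_(nv G)) : nat :=
  find (fun k => y \in reach G k x) (iota 0 (nv G)).

Definition distmx (G : sgraph) : 'M[rat]_(nv G) :=
  \matrix_(i, j) ((dist G i j)%:R)%R.

Definition D_cospectral (G1 G2 : sgraph) : Prop :=
  char_poly (distmx G1) = char_poly (distmx G2).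

Definition isomorphic (G1 G2 : sgraph) : Prop :=
  exists f : 'I_(nv G1) -> 'I_(nv G2),
    bijective f /\ forall x y, adj G2 (f x) (f y) = adj G1 x y.

(* K^h_n : K_h on {0..h-1}, with pendant vertices h..n-1 attached to 0 *)
Definition Kh (h n : nat) : sgraph :=
  @SGraph n (fun x y : 'I_n => (x != y) &&
    [|| (x < h) && (y < h), (x == 0 :> nat) && (h <= y) | (y == 0 :> nat) && (h <= x)]).

(* K^{s+t}_n (n = s+t): K_s on {0..s-1}, K_t on {s..s+t-1}, plus edge 0-s *)
Definition Ksplus (s t : nat) : sgraph :=
  @SGraph (s + t) (fun x y : 'I_(s + t) => (x != y) &&
    [|| (x < s) && (y < s), (s <= x) && (s <= y),
        (x == 0 :> nat) && (y == s :> nat) | (x == s :> nat) && (y == 0 :> nat)]).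

(* K^{s,t}_n (n = s+t-1): K_s on {0..s-1}, K_t on {0} u {s..s+t-2}; vertex 0 shared *)
Definition Kscomma (s t : nat) : sgraph :=
  @SGraph (s + t - 1) (fun x y : 'I_(s + t - 1) => (x != y) &&
    (((x < s) && (y < s)) ||
     (((x == 0 :> nat) || (s <= x)) && ((y == 0 :> nat) || (s <= y))))).

Definition in_families (G : sgraph) : Prop :=
  (exists h n, 3 <= h /\ h <= n - 1 /\ G = Kh h n) \/
  (exists s t, 2 <= s /\ 2 <= t /\ G = Ksplus s t) \/
  (exists s t, 2 <= s /\ 2 <= t /\ G = Kscomma s t).

(* Each graph of the three families has a partition of its vertices (the hub, the rest
   of the first clique, ...) such that the distance between two distinct vertices only
   depends on their cells. Writing [D + c] as a diagonal matrix plus a low-rank matrix,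
   Sylvester's identity [det (1 + XY) = det (1 + YX)] reduces [det (D + c)] to a 3x3 or
   4x4 determinant and yields [char_poly (- D) = (X - 1)^A (X - 2)^B q] with [q] a cubic
   or quartic not vanishing at 1 and 2. The multiplicities [A], [B] and a coefficient
   of [q] recover the parameters, up to the isomorphisms
   [K^{s+t} = K^{t+s}], [K^{s,t} = K^{t,s}] and [K^{n-1}_n = K^{n-1,2}]. *)

From mathcomp Require Import all_boot all_order all_algebra.
From mathcomp Require Import zify ring lra.
Import GRing.Theory Num.Theory.

Lemma reachS (G : sgraph) k x :
  reach G k.+1 x = reach G k x :|: [set z | [exists y in reach G k x, adj G y z]].
Proof. by rewrite /reach iterS. Qed.

Lemma find_iota_leq m s n : s <= m < s + n ->
  find (fun k => m <= k) (iota s n) = m - s.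
Proof.
elim: n s => [|n IHn] s /=; first lia.
by move=> lt_m; case: ifP => le_ms; [lia | rewrite IHn; lia].
Qed.

Lemma eq_dist (G : sgraph) (f : 'I_(nv G) -> 'I_(nv G) -> nat) :
  (forall x y, (f x y == 0) = (x == y)) ->
  (forall x z y, adj G z y -> f x y <= (f x z).+1) ->
  (forall x y, 0 < f x y -> exists2 z, adj G z y & (f x z).+1 = f x y) ->
  (forall x y, f x y < nv G) ->
  forall x y, dist G x y = f x y.
Proof.
move=> f0 f_lip f_pred f_lt x y.
have reachE k : reach G k x = [set z | f x z <= k].
  elim: k => [|k IHk].
    by apply/setP=> z; rewrite /reach /= !inE leqn0 f0 eq_sym.
  rewrite reachS IHk; apply/setP=> z; rewrite !inE; apply/idP/idP.
    case/orP=> [le_zk|/existsP[w /andP[]]]; first lia.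
    by rewrite inE => le_wk /(f_lip x) le_z; lia.
  move=> le_zSk; have [le_zk|gt_zk] := leqP (f x z) k; first by apply/orP; left.
  have [w adj_wz f_wz] := f_pred x z (leq_ltn_trans (leq0n k) gt_zk).
  by apply/orP; right; apply/existsP; exists w; rewrite inE adj_wz andbT; lia.
rewrite /dist (@eq_find _ _ (fun k => f x y <= k)); last by move=> k; rewrite reachE inE.
by rewrite find_iota_leq ?subn0 //; have := f_lt x y; lia.
Qed.

Lemma eq_dist_nat (G : sgraph) (e : rel nat) (f w : nat -> nat -> nat) :
  (forall x y : 'I_(nv G), adj G x y = e x y) ->
  (forall x y, x < nv G -> y < nv G -> (f x y == 0) = (x == y)) ->
  (forall x z y, x < nv G -> z < nv G -> y < nv G -> e z y -> f x y <= (f x z).+1) ->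
  (forall x y, x < nv G -> y < nv G -> 0 < f x y ->
     [&& w x y < nv G, e (w x y) y & (f x (w x y)).+1 == f x y]) ->
  (forall x y, x < nv G -> y < nv G -> f x y < nv G) ->
  forall x y : 'I_(nv G), dist G x y = f x y.
Proof.
move=> adjE f0 f_lip w_pred f_lt.
apply: (@eq_dist G (fun x y : 'I_(nv G) => f x y)).
- by move=> x y; rewrite f0.
- by move=> x z y; rewrite adjE; apply: f_lip.
- move=> x y f_gt0; have /and3P[w_lt e_wy /eqP f_w] := w_pred x y (ltn_ord _) (ltn_ord _) f_gt0.
  by exists (Ordinal w_lt); rewrite ?adjE.
- by move=> x y; apply: f_lt.
Qed.

Lemma dist_xx (G : sgraph) x : dist G x x = 0.
Proof.
by rewrite /dist -[X in iota 0 X](ltn_predK (ltn_ord x)) /= /reach /= inE eqxx.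
Qed.

(* The predecessor of [y] on a geodesic from [x]: [x] itself, or the hub [0]. *)
Definition hub_pred (f : nat -> nat -> nat) (x y : nat) : nat :=
  if f x y == 1 then x else 0.

Definition Kh_adj (h x y : nat) : bool := (x != y) &&
  [|| (x < h) && (y < h), (x == 0) && (h <= y) | (y == 0) && (h <= x)].

Definition Kh_dist (h x y : nat) : nat :=
  if x == y then 0 else if [|| x == 0, y == 0 | (x < h) && (y < h)] then 1 else 2.

Lemma dist_Kh h n : 3 <= h -> h <= n - 1 ->
  forall x y : 'I_(nv (Kh h n)), dist (Kh h n) x y = Kh_dist h x y.
Proof.
move=> h_ge3 h_le.
apply: (@eq_dist_nat _ (Kh_adj h) _ (hub_pred (Kh_dist h))) => //=;
  rewrite /Kh_adj /Kh_dist /hub_pred => x y; try move=> z; repeat (case: ifP => /=); lia.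
Qed.

Definition Kscomma_adj (s x y : nat) : bool := (x != y) &&
  (((x < s) && (y < s)) || (((x == 0) || (s <= x)) && ((y == 0) || (s <= y)))).

Definition Kscomma_dist (s x y : nat) : nat :=
  if x == y then 0 else if [|| x == 0, y == 0 | (x < s) == (y < s)] then 1 else 2.

Lemma dist_Kscomma s t : 2 <= s -> 2 <= t ->
  forall x y : 'I_(nv (Kscomma s t)), dist (Kscomma s t) x y = Kscomma_dist s x y.
Proof.
move=> s_ge2 t_ge2.
apply: (@eq_dist_nat _ (Kscomma_adj s) _ (hub_pred (Kscomma_dist s))) => //=;
  rewrite /Kscomma_adj /Kscomma_dist /hub_pred => x y; try move=> z;
  repeat (case: ifP => /=); lia.
Qed.

Definition Ksplus_adj (s x y : nat) : bool := (x != y) &&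
  [|| (x < s) && (y < s), (s <= x) && (s <= y),
      (x == 0) && (y == s) | (x == s) && (y == 0)].

(* A path from [x < s] to [y >= s] goes [x] - [0] - [s] - [y]. *)
Definition Ksplus_cross (s x y : nat) : nat := (x != 0) + (y != s) + 1.

Definition Ksplus_dist (s x y : nat) : nat :=
  if x == y then 0 else if (x < s) == (y < s) then 1
  else if x < s then Ksplus_cross s x y else Ksplus_cross s y x.

Definition Ksplus_pred (s x y : nat) : nat :=
  if Ksplus_dist s x y == 1 then x
  else if x < s then (if y == s then 0 else s) else (if y == 0 then s else 0).

Lemma dist_Ksplus s t : 2 <= s -> 2 <= t ->
  forall x y : 'I_(nv (Ksplus s t)), dist (Ksplus s t) x y = Ksplus_dist s x y.
Proof.
move=> s_ge2 t_ge2.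
apply: (@eq_dist_nat _ (Ksplus_adj s) _ (Ksplus_pred s)) => //=;
  rewrite /Ksplus_pred /Ksplus_adj /Ksplus_dist /Ksplus_cross => x y; try move=> z;
  repeat (case: ifP => /=); lia.
Qed.

Lemma isomorphic_nat (G1 G2 : sgraph) (e1 e2 : rel nat) (g g' : nat -> nat) :
  (forall x y : 'I_(nv G1), adj G1 x y = e1 x y) ->
  (forall x y : 'I_(nv G2), adj G2 x y = e2 x y) ->
  (forall x, x < nv G1 -> g x < nv G2) -> (forall y, y < nv G2 -> g' y < nv G1) ->
  (forall x, x < nv G1 -> g' (g x) = x) -> (forall y, y < nv G2 -> g (g' y) = y) ->
  (forall x y, x < nv G1 -> y < nv G1 -> e2 (g x) (g y) = e1 x y) -> isomorphic G1 G2.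
Proof.
move=> adj1E adj2E g_lt g'_lt gK g'K e_g.
exists (fun x : 'I_(nv G1) => Ordinal (g_lt x (ltn_ord x))); split.
  exists (fun y : 'I_(nv G2) => Ordinal (g'_lt y (ltn_ord y))).
    by move=> x; apply: val_inj; rewrite /= gK.
  by move=> y; apply: val_inj; rewrite /= g'K.
by move=> x y; rewrite adj1E adj2E /= e_g.
Qed.

Lemma isomorphic_refl G : isomorphic G G.
Proof. by exists id; split => //; exists id. Qed.

Lemma isomorphic_sym G1 G2 : isomorphic G1 G2 -> isomorphic G2 G1.
Proof.
case=> f [[g fK gK] adj_f]; exists g; split; first by exists f.
by move=> x y; rewrite -adj_f !gK.
Qed.

Lemma isomorphic_trans G1 G2 G3 :
  isomorphic G1 G2 -> isomorphic G2 G3 -> isomorphic G1 G3.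
Proof.
case=> f [[f' fK f'K] adj_f] [g [[g' gK g'K] adj_g]].
exists (g \o f); split; last by move=> x y /=; rewrite adj_g adj_f.
by exists (f' \o g') => x /=; rewrite ?gK ?fK ?g'K ?f'K.
Qed.

Lemma Kscomma_sym s t : 2 <= s -> 2 <= t -> isomorphic (Kscomma s t) (Kscomma t s).
Proof.
move=> s_ge2 t_ge2.
apply: (@isomorphic_nat _ _ (Kscomma_adj s) (Kscomma_adj t)
  (fun x => if x == 0 then 0 else if x < s then x + t - 1 else x - s + 1)
  (fun y => if y == 0 then 0 else if y < t then y + s - 1 else y - t + 1)) => //=;
  rewrite /Kscomma_adj => x; try move=> y; repeat (case: ifP => /=); lia.
Qed.

Lemma Ksplus_sym s t : 2 <= s -> 2 <= t -> isomorphic (Ksplus s t) (Ksplus t s).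
Proof.
move=> s_ge2 t_ge2.
apply: (@isomorphic_nat _ _ (Ksplus_adj s) (Ksplus_adj t)
  (fun x => if x < s then x + t else x - s) (fun y => if y < t then y + s else y - t)) => //=;
  rewrite /Ksplus_adj => x; try move=> y; repeat (case: ifP => /=); lia.
Qed.

Lemma Kh_Kscomma n : 4 <= n -> isomorphic (Kh (n - 1) n) (Kscomma (n - 1) 2).
Proof.
move=> n_ge4.
apply: (@isomorphic_nat _ _ (Kh_adj (n - 1)) (Kscomma_adj (n - 1)) id id) => //=;
  rewrite /Kh_adj /Kscomma_adj => x; try move=> y; repeat (case: ifP => /=); lia.
Qed.

Lemma isomorphic_Kh_Kscomma n s t : 4 <= n ->
  s = n - 1 /\ t = 2 \/ s = 2 /\ t = n - 1 -> isomorphic (Kh (n - 1) n) (Kscomma s t).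
Proof.
move=> n_ge4 st; apply: isomorphic_trans (Kh_Kscomma _ n_ge4) _.
by case: st => [[-> ->]|[-> ->]]; [apply: isomorphic_refl | apply: Kscomma_sym; lia].
Qed.

Lemma count_iota_range a b n :
  count (fun x => a <= x < b)%N (iota 0 n) = (minn b n - minn a n)%N.
Proof.
elim: n => [|n IHn]; first by rewrite !minn0.
by rewrite -addn1 iotaD count_cat IHn /= addn0; case: leqP; case: ltnP => /=; lia.
Qed.

Definition class_count n (cn : nat -> nat) (l : nat) : nat :=
  count (fun x => cn x == l) (iota 0 n).

Lemma class_count_range n (cn : nat -> nat) l a b : a <= b <= n ->
  {in iota 0 n, forall x, (cn x == l) = (a <= x < b)} -> class_count n cn l = b - a.
Proof.
move=> /andP[le_ab le_bn] cnE; rewrite /class_count (eq_in_count cnE) count_iota_range.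
by rewrite (minn_idPl le_bn) (minn_idPl (leq_trans le_ab le_bn)).
Qed.

Definition table (rows : seq (seq nat)) (l m : nat) : nat := nth 0 (nth [::] rows l) m.

Definition Kh_class (h x : nat) : nat := if x == 0 then 0 else if x < h then 1 else 2.

Definition Kh_quot : seq (seq nat) := [:: [:: 0; 1; 1]; [:: 1; 1; 2]; [:: 1; 2; 2]].

Definition Kscomma_class (s x : nat) : nat := if x == 0 then 0 else if x < s then 1 else 2.

Definition Kscomma_quot : seq (seq nat) := [:: [:: 0; 1; 1]; [:: 1; 1; 2]; [:: 1; 2; 1]].

Definition Ksplus_class (s x : nat) : nat :=
  if x == 0 then 0 else if x < s then 1 else if x == s then 2 else 3.

Definition Ksplus_quot : seq (seq nat) :=
  [:: [:: 0; 1; 1; 2]; [:: 1; 1; 2; 3]; [:: 1; 2; 0; 1]; [:: 2; 3; 1; 1]].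

Local Open Scope ring_scope.

Lemma det_mx3 (R : comPzRingType) (f : nat -> nat -> R) :
  \det (\matrix_(i < 3, j < 3) f i j) =
  f 0%N 0%N * f 1%N 1%N * f 2%N 2%N - f 0%N 0%N * f 1%N 2%N * f 2%N 1%N
  - f 0%N 1%N * f 1%N 0%N * f 2%N 2%N + f 0%N 1%N * f 1%N 2%N * f 2%N 0%N
  + f 0%N 2%N * f 1%N 0%N * f 2%N 1%N - f 0%N 2%N * f 1%N 1%N * f 2%N 0%N.
Proof.
repeat rewrite (expand_det_row _ ord0) !big_ord_recr big_ord0 /cofactor /=.
by rewrite !det_mx00 !mxE /= /bump /=; ring.
Qed.

Lemma det_mx4 (R : comPzRingType) (f : nat -> nat -> R) :
  \det (\matrix_(i < 4, j < 4) f i j) =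
  f 0%N 0%N * f 1%N 1%N * f 2%N 2%N * f 3%N 3%N - f 0%N 0%N * f 1%N 1%N * f 2%N 3%N * f 3%N 2%N
  - f 0%N 0%N * f 1%N 2%N * f 2%N 1%N * f 3%N 3%N + f 0%N 0%N * f 1%N 2%N * f 2%N 3%N * f 3%N 1%N
  + f 0%N 0%N * f 1%N 3%N * f 2%N 1%N * f 3%N 2%N - f 0%N 0%N * f 1%N 3%N * f 2%N 2%N * f 3%N 1%N
  - f 0%N 1%N * f 1%N 0%N * f 2%N 2%N * f 3%N 3%N + f 0%N 1%N * f 1%N 0%N * f 2%N 3%N * f 3%N 2%N
  + f 0%N 1%N * f 1%N 2%N * f 2%N 0%N * f 3%N 3%N - f 0%N 1%N * f 1%N 2%N * f 2%N 3%N * f 3%N 0%N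
  - f 0%N 1%N * f 1%N 3%N * f 2%N 0%N * f 3%N 2%N + f 0%N 1%N * f 1%N 3%N * f 2%N 2%N * f 3%N 0%N
  + f 0%N 2%N * f 1%N 0%N * f 2%N 1%N * f 3%N 3%N - f 0%N 2%N * f 1%N 0%N * f 2%N 3%N * f 3%N 1%N
  - f 0%N 2%N * f 1%N 1%N * f 2%N 0%N * f 3%N 3%N + f 0%N 2%N * f 1%N 1%N * f 2%N 3%N * f 3%N 0%N
  + f 0%N 2%N * f 1%N 3%N * f 2%N 0%N * f 3%N 1%N - f 0%N 2%N * f 1%N 3%N * f 2%N 1%N * f 3%N 0%N
  - f 0%N 3%N * f 1%N 0%N * f 2%N 1%N * f 3%N 2%N + f 0%N 3%N * f 1%N 0%N * f 2%N 2%N * f 3%N 1%N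
  + f 0%N 3%N * f 1%N 1%N * f 2%N 0%N * f 3%N 2%N - f 0%N 3%N * f 1%N 1%N * f 2%N 2%N * f 3%N 0%N
  - f 0%N 3%N * f 1%N 2%N * f 2%N 0%N * f 3%N 1%N + f 0%N 3%N * f 1%N 2%N * f 2%N 1%N * f 3%N 0%N.
Proof.
repeat rewrite (expand_det_row _ ord0) !big_ord_recr big_ord0 /cofactor /=.
by rewrite !det_mx00 !mxE /= /bump /=; ring.
Qed.

Lemma sylvester_det (R : comPzRingType) m n (X : 'M[R]_(m, n)) (Y : 'M[R]_(n, m)) :
  \det (1%:M + X *m Y) = \det (1%:M + Y *m X).
Proof.
have E1 : block_mx 1%:M X (- Y) 1%:M =
          block_mx 1%:M 0 (- Y) 1%:M *m block_mx 1%:M X 0 (1%:M + Y *m X).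
  rewrite mulmx_block ?mulmx0 ?mul0mx ?mul1mx ?mulmx1 ?addr0 ?add0r ?mulNmx.
  by rewrite addrC addrK.
have E2 : block_mx 1%:M X (- Y) 1%:M =
          block_mx (1%:M + X *m Y) X 0 1%:M *m block_mx 1%:M 0 (- Y) 1%:M.
  rewrite mulmx_block ?mulmx0 ?mul0mx ?mul1mx ?mulmx1 ?addr0 ?add0r ?mulmxN.
  by rewrite addrK.
have := congr1 determinant E1; rewrite E2 !det_mulmx det_lblock det_ublock.
by rewrite !det_ublock !det1 !mul1r !mulr1 => ->.
Qed.

Section QuotientMatrix.

Variables (F : fieldType) (n k : nat) (cl : 'I_n -> 'I_k).

Definition class_mx : 'M[F]_(n, k) := \matrix_(i, l) (cl i == l)%:R.

Lemma class_mxE p (A : 'M[F]_(k, p)) i j : (class_mx *m A) i j = A (cl i) j.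
Proof.
rewrite mxE (bigD1 (cl i)) //= mxE eqxx mul1r big1 ?addr0 // => l /negbTE ne_l.
by rewrite mxE eq_sym ne_l mul0r.
Qed.

Lemma mul_class_mx_trE p (A : 'M[F]_(p, k)) i j : (A *m class_mx^T) i j = A i (cl j).
Proof.
rewrite mxE (bigD1 (cl j)) //= !mxE eqxx mulr1 big1 ?addr0 // => l /negbTE ne_l.
by rewrite !mxE eq_sym ne_l mulr0.
Qed.

Definition class_size (l : 'I_k) : nat := #|[pred i | cl i == l]|.

(* [D + c] is a diagonal matrix plus the rank-[k] matrix [U W U^T], with [U] the
   class indicator matrix; Sylvester's identity moves the determinant to size [k]. *)
Lemma det_quotient (W : 'M[F]_k) (D : 'M[F]_n) (c : F) :
  (forall i j, i != j -> D i j = W (cl i) (cl j)) -> (forall i, D i i = 0) ->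
  (forall l, c - W l l != 0) ->
  \det (D + c%:M) = (\prod_l (c - W l l) ^+ class_size l) *
    \det (1%:M + W *m diag_mx (\row_l ((class_size l)%:R / (c - W l l)))).
Proof.
move=> DE D0 c_neq.
pose Dl := diag_mx (\row_i (c - W (cl i) (cl i))).
pose Dl' := diag_mx (\row_i (c - W (cl i) (cl i))^-1).
have DlK : Dl *m Dl' = 1%:M.
  apply/matrixP=> i j; rewrite mul_diag_mx !mxE.
  by case: (eqVneq i j) => [->|]; rewrite ?mulr1n ?mulfV // !mulr0n mulr0.
have splitD : D + c%:M = Dl *m (1%:M + (Dl' *m class_mx) *m (W *m class_mx^T)).
  rewrite mulmxDr mulmx1 !mulmxA DlK mul1mx; apply/matrixP=> i j.
  rewrite [RHS]mxE mul_class_mx_trE class_mxE !mxE.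
  case: (eqVneq i j) => [<-|ne_ij]; first by rewrite D0 add0r mulr1n subrK.
  by rewrite DE // !mulr0n addr0 add0r.
have swapE : (W *m class_mx^T) *m (Dl' *m class_mx) =
    W *m diag_mx (\row_l ((class_size l)%:R / (c - W l l))).
  rewrite -!mulmxA; congr (_ *m _); apply/matrixP=> l m; rewrite !mxE.
  under eq_bigr => i _ do rewrite mul_diag_mx !mxE.
  case: (eqVneq l m) => [<-|ne_lm].
    rewrite mulr1n (bigID (fun i => cl i == l)) /= [X in _ + X]big1 ?addr0; last first.
      by move=> i /negbTE ->; rewrite mul0r.
    rewrite (eq_bigr (fun _ => (c - W l l)^-1)); last first.
      by move=> i /eqP ->; rewrite eqxx mulr1 mul1r.
    by rewrite sumr_const mulr_natl.
  rewrite mulr0n big1 // => i _.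
  case: (eqVneq (cl i) l) => [cl_il|_]; last by rewrite mul0r.
  by move: ne_lm; rewrite -cl_il => /negbTE ->; rewrite !mulr0.
rewrite splitD det_mulmx sylvester_det swapE det_diag; congr (_ * _).
rewrite (partition_big cl predT) //=; apply: eq_bigr => l _.
rewrite (eq_bigr (fun _ => c - W l l)); last by move=> i /eqP <-; rewrite mxE.
by rewrite prodr_const.
Qed.

End QuotientMatrix.

Arguments class_size {n k} cl l.

Definition quotient_entry {F : fieldType} n (cn : nat -> nat) (w : nat -> nat -> F)
    (c : F) (i j : nat) : F :=
  (i == j)%:R + w i j * (class_count n cn j)%:R / (c - w j j).

Lemma det_quotient_nat (F : fieldType) n k (cn : nat -> nat) (w : nat -> nat -> F)
    (D : 'M[F]_n) (c : F) :
  (forall x : 'I_n, cn x < k.+1)%N ->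
  (forall i j : 'I_n, i != j -> D i j = w (cn i) (cn j)) -> (forall i, D i i = 0) ->
  (forall l, (l < k.+1)%N -> c - w l l != 0) ->
  \det (D + c%:M) = (\prod_(l < k.+1) (c - w l l) ^+ class_count n cn l) *
    \det (\matrix_(i < k.+1, j < k.+1) quotient_entry n cn w c i j).
Proof.
move=> cn_lt DE D0 c_neq.
pose cl (i : 'I_n) : 'I_k.+1 := inord (cn i).
have clE i : cl i = cn i :> nat by rewrite /cl inordK.
have sizeE l : class_size cl l = class_count n cn l.
  rewrite /class_size /class_count -sum1_card -sum1_count.
  rewrite (_ : iota 0 n = index_iota 0 n) ?big_mkord; last by rewrite /index_iota subn0.
  by apply: eq_bigl => i; rewrite !inE -(inj_eq val_inj) /= clE.
rewrite (@det_quotient _ n k.+1 cl (\matrix_(l, m) w l m) D c).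
- congr (_ * _); first by apply: eq_bigr => l _; rewrite sizeE mxE.
  by congr (\det _); apply/matrixP=> i j; rewrite mul_mx_diag !mxE sizeE mulrA.
- by move=> i j ne_ij; rewrite mxE !clE; apply: DE.
- exact: D0.
- by move=> l; rewrite mxE; apply: c_neq.
Qed.

Lemma det_distmx_quotient (G : sgraph) k (cn : nat -> nat) (T : seq (seq nat)) (c : rat) :
  (forall x : 'I_(nv G), cn x < k.+1)%N ->
  (forall x y : 'I_(nv G), x != y -> dist G x y = table T (cn x) (cn y)) ->
  (forall l, (l < k.+1)%N -> c - (table T l l)%:R != 0) ->
  \det (distmx G + c%:M) =
    (\prod_(l < k.+1) (c - (table T l l)%:R) ^+ class_count (nv G) cn l) *
    \det (\matrix_(i < k.+1, j < k.+1)
            quotient_entry (nv G) cn (fun l m => (table T l m)%:R) c i j).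
Proof.
move=> cn_lt distE c_neq; apply: det_quotient_nat => // [x y ne_xy|x].
  by rewrite mxE distE.
by rewrite mxE dist_xx.
Qed.

(* The shape of [char_poly (- D)]: [D] has eigenvalues [-1] and [-2] with
   multiplicities [A] and [B], the others being the negated roots of [q]. *)
Definition dpoly (A B : nat) (q : {poly rat}) : {poly rat} :=
  ('X - 1%:P) ^+ A * (('X - 2%:P) ^+ B * q).

Definition Kh_cubic (a b : rat) : {poly rat} :=
  'X^3 + (a + 2 * b - 3)%:P * 'X^2 + (- (2 * a * b) - 3 * a - 3 * b + 2)%:P * 'X
  + (a * b + 2 * a + b)%:P.

Definition Kh_poly (h n : nat) : {poly rat} :=
  dpoly (h - 2) (n - h - 1) (Kh_cubic (h - 1)%:R (n - h)%:R).

Definition Kscomma_cubic (a b : rat) : {poly rat} :=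
  'X^3 + (a + b - 2)%:P * 'X^2 + (- (3 * a * b) - 2 * a - 2 * b + 1)%:P * 'X
  + (2 * a * b + a + b)%:P.

Definition Kscomma_poly (s t : nat) : {poly rat} :=
  dpoly (s + t - 4) 0 (Kscomma_cubic (s - 1)%:R (t - 1)%:R).

Definition Ksplus_quartic (a b : rat) : {poly rat} :=
  'X^4 + (a + b - 2)%:P * 'X^3 + (- (8 * a * b) - 6 * a - 6 * b)%:P * 'X^2
  + (14 * a * b + 8 * a + 8 * b + 2)%:P * 'X + (- (5 * a * b) - 3 * a - 3 * b - 1)%:P.

Definition Ksplus_poly (s t : nat) : {poly rat} :=
  dpoly (s + t - 4) 0 (Ksplus_quartic (s - 1)%:R (t - 1)%:R).

Lemma det_Kh h n (c : rat) : (3 <= h)%N -> (h <= n - 1)%N -> c != 0 -> c != 1 -> c != 2 ->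
  \det (distmx (Kh h n) + c%:M) = (Kh_poly h n).[c].
Proof.
move=> h_ge3 h_le c0 c1 c2.
rewrite (@det_distmx_quotient _ 2 (Kh_class h) Kh_quot).
- have cnt0 : class_count n (Kh_class h) 0 = 1%N.
    by rewrite (@class_count_range _ _ _ 0 1) => [|| x]; rewrite ?mem_iota ?/Kh_class;
      repeat (case: ifP => /=); lia.
  have cnt1 : class_count n (Kh_class h) 1 = (h - 1)%N.
    by rewrite (@class_count_range _ _ _ 1 h) => [|| x]; rewrite ?mem_iota ?/Kh_class;
      repeat (case: ifP => /=); lia.
  have cnt2 : class_count n (Kh_class h) 2 = (n - h)%N.
    by rewrite (@class_count_range _ _ _ h n) => [|| x]; rewrite ?mem_iota ?/Kh_class;
      repeat (case: ifP => /=); lia.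
  rewrite !big_ord_recr big_ord0 [X in X * \det _]/= det_mx3 /quotient_entry cnt0 cnt1 cnt2.
  cbn [table Kh_quot nth]; rewrite -!eqnE; cbn [eqn]; rewrite ?mulr1n ?mulr0n.
  rewrite /Kh_poly /dpoly /Kh_cubic.
  rewrite !hornerM !horner_exp !hornerXsubC !hornerD !hornerCM !hornerXn hornerX hornerC.
  set a := (h - 2)%N; set b := (n - h - 1)%N.
  have -> : (h - 1 = a.+1)%N by rewrite /a; lia.
  have -> : (n - h = b.+1)%N by rewrite /b; lia.
  rewrite !exprSr; set P1 := (c - 1) ^+ a; set P2 := (c - 2) ^+ b.
  by field; rewrite !subr_eq0 c0 c1 c2.
- by move=> x; rewrite /Kh_class; repeat (case: ifP => _ /=).
- move=> x y; rewrite dist_Kh // -(inj_eq val_inj) /Kh_dist /Kh_class /table /Kh_quot.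
  by repeat (case: ifP => /=); lia.
- by case=> [|[|[]]] //= _; rewrite subr_eq0 ?subr0.
Qed.

Lemma det_Kscomma s t (c : rat) : (2 <= s)%N -> (2 <= t)%N -> c != 0 -> c != 1 ->
  \det (distmx (Kscomma s t) + c%:M) = (Kscomma_poly s t).[c].
Proof.
move=> s_ge2 t_ge2 c0 c1; set n := (s + t - 1)%N.
rewrite (@det_distmx_quotient _ 2 (Kscomma_class s) Kscomma_quot).
- have cnt0 : class_count n (Kscomma_class s) 0 = 1%N.
    by rewrite (@class_count_range _ _ _ 0 1) => [|| x]; rewrite ?mem_iota ?/Kscomma_class;
      repeat (case: ifP => /=); lia.
  have cnt1 : class_count n (Kscomma_class s) 1 = (s - 1)%N.
    by rewrite (@class_count_range _ _ _ 1 s) => [|| x]; rewrite ?mem_iota ?/Kscomma_class;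
      repeat (case: ifP => /=); lia.
  have cnt2 : class_count n (Kscomma_class s) 2 = (t - 1)%N.
    by rewrite (@class_count_range _ _ _ s n) => [|| x]; rewrite ?mem_iota ?/Kscomma_class;
      repeat (case: ifP => /=); lia.
  rewrite !big_ord_recr big_ord0 [X in X * \det _]/= det_mx3 /quotient_entry cnt0 cnt1 cnt2.
  cbn [table Kscomma_quot nth]; rewrite -!eqnE; cbn [eqn]; rewrite ?mulr1n ?mulr0n.
  rewrite /Kscomma_poly /dpoly /Kscomma_cubic.
  rewrite !hornerM !horner_exp !hornerXsubC !hornerD !hornerCM !hornerXn hornerX hornerC.
  set a := (s - 2)%N; set b := (t - 2)%N.
  have -> : (s - 1 = a.+1)%N by rewrite /a; lia.
  have -> : (t - 1 = b.+1)%N by rewrite /b; lia.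
  have -> : (s + t - 4 = a + b)%N by rewrite /a /b; lia.
  rewrite exprD !exprSr; set P1 := (c - 1) ^+ a; set P2 := (c - 1) ^+ b.
  by field; rewrite !subr_eq0 c0 c1.
- by move=> x; rewrite /Kscomma_class; repeat (case: ifP => _ /=).
- move=> x y; rewrite dist_Kscomma // -(inj_eq val_inj).
  rewrite /Kscomma_dist /Kscomma_class /table /Kscomma_quot.
  by repeat (case: ifP => /=); lia.
- by case=> [|[|[]]] //= _; rewrite subr_eq0 ?subr0.
Qed.

Lemma det_Ksplus s t (c : rat) : (2 <= s)%N -> (2 <= t)%N -> c != 0 -> c != 1 ->
  \det (distmx (Ksplus s t) + c%:M) = (Ksplus_poly s t).[c].
Proof.
move=> s_ge2 t_ge2 c0 c1; set n := (s + t)%N.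
rewrite (@det_distmx_quotient _ 3 (Ksplus_class s) Ksplus_quot).
- have cnt0 : class_count n (Ksplus_class s) 0 = 1%N.
    by rewrite (@class_count_range _ _ _ 0 1) => [|| x]; rewrite ?mem_iota ?/Ksplus_class;
      repeat (case: ifP => /=); lia.
  have cnt1 : class_count n (Ksplus_class s) 1 = (s - 1)%N.
    by rewrite (@class_count_range _ _ _ 1 s) => [|| x]; rewrite ?mem_iota ?/Ksplus_class;
      repeat (case: ifP => /=); lia.
  have cnt2 : class_count n (Ksplus_class s) 2 = 1%N.
    by rewrite (@class_count_range _ _ _ s s.+1) => [|| x]; rewrite ?mem_iota ?/Ksplus_class;
      repeat (case: ifP => /=); lia.
  have cnt3 : class_count n (Ksplus_class s) 3 = (t - 1)%N.
    by rewrite (@class_count_range _ _ _ s.+1 n) => [|| x]; rewrite ?mem_iota ?/Ksplus_class;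
      repeat (case: ifP => /=); lia.
  rewrite !big_ord_recr big_ord0 [X in X * \det _]/= det_mx4 /quotient_entry.
  rewrite cnt0 cnt1 cnt2 cnt3.
  cbn [table Ksplus_quot nth]; rewrite -!eqnE; cbn [eqn]; rewrite ?mulr1n ?mulr0n.
  rewrite /Ksplus_poly /dpoly /Ksplus_quartic.
  rewrite !hornerM !horner_exp !hornerXsubC !hornerD !hornerCM !hornerXn hornerX hornerC.
  set a := (s - 2)%N; set b := (t - 2)%N.
  have -> : (s - 1 = a.+1)%N by rewrite /a; lia.
  have -> : (t - 1 = b.+1)%N by rewrite /b; lia.
  have -> : (s + t - 4 = a + b)%N by rewrite /a /b; lia.
  rewrite exprD !exprSr; set P1 := (c - 1) ^+ a; set P2 := (c - 1) ^+ b.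
  by field; rewrite !subr_eq0 c0 c1.
- by move=> x; rewrite /Ksplus_class; repeat (case: ifP => _ /=).
- move=> x y; rewrite dist_Ksplus // -(inj_eq val_inj).
  rewrite /Ksplus_dist /Ksplus_cross /Ksplus_class /table /Ksplus_quot.
  by repeat (case: ifP => /=); lia.
- by case=> [|[|[|[]]]] //= _; rewrite subr_eq0 ?subr0.
Qed.

Lemma horner_char_poly {R : comNzRingType} n (A : 'M[R]_n) (x : R) :
  (char_poly A).[x] = \det (x%:M - A).
Proof.
rewrite /char_poly -horner_evalE -det_map_mx; congr (\det _); apply/matrixP=> i j.
by rewrite !mxE /= horner_evalE hornerD hornerN hornerMn hornerX hornerC.
Qed.

Lemma det_add_scalar {R : comNzRingType} n (A : 'M[R]_n) (x : R) :
  \det (A + x%:M) = (char_poly (- A)).[x].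
Proof. by rewrite horner_char_poly opprK addrC. Qed.

Lemma horner_char_polyN {R : comNzRingType} n (A : 'M[R]_n) (x : R) :
  (char_poly (- A)).[x] = (-1) ^+ n * (char_poly A).[- x].
Proof.
rewrite !horner_char_poly opprK raddfN -opprD -scaleN1r detZ mulrA -exprMn.
by rewrite mulrNN mulr1 expr1n mul1r addrC.
Qed.

Lemma eq_poly_natr {R : numDomainType} k (p q : {poly R}) :
  (forall m : nat, p.[(m + k)%:R] = q.[(m + k)%:R]) -> p = q.
Proof.
move=> pq; apply/eqP; rewrite -subr_eq0; apply/eqP.
apply: (@roots_geq_poly_eq0 _ _ [seq ((m + k)%:R : R) | m <- iota 0 (size (p - q))]).
- by apply/allP=> _ /mapP[m _ ->]; rewrite /root hornerD hornerN pq subrr.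
- by rewrite map_inj_uniq ?iota_uniq // => a b /eqP; rewrite eqr_nat eqn_add2r => /eqP.
- by rewrite size_map size_iota.
Qed.

Lemma D_cospectral_char_polyN G1 G2 : D_cospectral G1 G2 ->
  nv G1 = nv G2 /\ char_poly (- distmx G1) = char_poly (- distmx G2).
Proof.
rewrite /D_cospectral => cpE; have nvE : nv G1 = nv G2.
  by have := congr1 (fun p : {poly rat} => size p) cpE; rewrite !size_char_poly; case.
split=> //; apply: (eq_poly_natr 0) => m.
by rewrite (horner_char_polyN _ (distmx G1)) (horner_char_polyN _ (distmx G2)) cpE nvE.
Qed.

Lemma char_polyN_Kh h n : (3 <= h)%N -> (h <= n - 1)%N ->
  char_poly (- distmx (Kh h n)) = Kh_poly h n.
Proof.
move=> h_ge3 h_le; apply: (eq_poly_natr 3) => m.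
by rewrite -det_add_scalar det_Kh // ?pnatr_eq0 ?pnatr_eq1 ?eqr_nat addn3.
Qed.

Lemma char_polyN_Kscomma s t : (2 <= s)%N -> (2 <= t)%N ->
  char_poly (- distmx (Kscomma s t)) = Kscomma_poly s t.
Proof.
move=> s_ge2 t_ge2; apply: (eq_poly_natr 2) => m.
by rewrite -det_add_scalar det_Kscomma // ?pnatr_eq0 ?pnatr_eq1 addn2.
Qed.

Lemma char_polyN_Ksplus s t : (2 <= s)%N -> (2 <= t)%N ->
  char_poly (- distmx (Ksplus s t)) = Ksplus_poly s t.
Proof.
move=> s_ge2 t_ge2; apply: (eq_poly_natr 2) => m.
by rewrite -det_add_scalar det_Ksplus // ?pnatr_eq0 ?pnatr_eq1 addn2.
Qed.

Lemma XsubC_exp_cancel (F : fieldType) (a : F) A A' (r r' : {poly F}) :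
  ~~ root r a -> ~~ root r' a ->
  ('X - a%:P) ^+ A * r = ('X - a%:P) ^+ A' * r' -> A = A' /\ r = r'.
Proof.
move=> r_a r'_a E.
have AE : A = A' by have := congr1 (mup a) E; rewrite !mupMl // !mup_XsubCX eqxx.
have nz_XA : ('X - a%:P) ^+ A != 0 by rewrite expf_neq0 // polyXsubC_eq0.
by split=> //; apply: (mulfI nz_XA); rewrite E AE.
Qed.

Lemma dpoly_inj A B q A' B' q' :
  ~~ root q 1 -> ~~ root q 2 -> ~~ root q' 1 -> ~~ root q' 2 ->
  dpoly A B q = dpoly A' B' q' -> [/\ A = A', B = B' & q = q'].
Proof.
move=> q1 q2 q1' q2'.
have nroot1 B0 (q0 : {poly rat}) : ~~ root q0 1 -> ~~ root (('X - 2%:P) ^+ B0 * q0) 1.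
  by case: B0 => [|B0] nq0; rewrite rootM negb_or nq0 andbT ?expr0 ?root1 ?root_exp_XsubC.
move=> E; have [AE E2] := @XsubC_exp_cancel _ 1 _ _ _ _ (nroot1 B q q1) (nroot1 B' q' q1') E.
by have [BE qE] := @XsubC_exp_cancel _ 2 _ _ _ _ q2 q2' E2.
Qed.

Lemma Kh_cubicE a b x : (Kh_cubic a b).[x] = x ^+ 3 + (a + 2 * b - 3) * x ^+ 2
  + (- (2 * a * b) - 3 * a - 3 * b + 2) * x + (a * b + 2 * a + b).
Proof. by rewrite /Kh_cubic !hornerD !hornerCM !hornerXn hornerX hornerC. Qed.

Lemma Kscomma_cubicE a b x : (Kscomma_cubic a b).[x] = x ^+ 3 + (a + b - 2) * x ^+ 2
  + (- (3 * a * b) - 2 * a - 2 * b + 1) * x + (2 * a * b + a + b).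
Proof. by rewrite /Kscomma_cubic !hornerD !hornerCM !hornerXn hornerX hornerC. Qed.

Lemma Ksplus_quarticE a b x : (Ksplus_quartic a b).[x] = x ^+ 4 + (a + b - 2) * x ^+ 3
  + (- (8 * a * b) - 6 * a - 6 * b) * x ^+ 2 + (14 * a * b + 8 * a + 8 * b + 2) * x
  + (- (5 * a * b) - 3 * a - 3 * b - 1).
Proof. by rewrite /Ksplus_quartic !hornerD !hornerCM !hornerXn hornerX hornerC. Qed.

Lemma Kh_cubic_nroot h n : (3 <= h)%N -> (h <= n - 1)%N ->
  let q := Kh_cubic (h - 1)%:R (n - h)%:R in ~~ root q 1 /\ ~~ root q 2.
Proof.
move=> h_ge3 h_le /=; rewrite /root !Kh_cubicE.
have a_ge2 : 2 <= (h - 1)%:R :> rat by rewrite ler_nat; lia.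
have b_ge1 : 1 <= (n - h)%:R :> rat by rewrite ler1n; lia.
by split; apply: ltr0_neq0; rewrite ?expr1n; nra.
Qed.

Lemma Kscomma_cubic_nroot s t : (2 <= s)%N -> (2 <= t)%N -> (5 <= s + t)%N ->
  let q := Kscomma_cubic (s - 1)%:R (t - 1)%:R in ~~ root q 1 /\ ~~ root q 2.
Proof.
move=> s_ge2 t_ge2 st_ge5 /=; rewrite /root !Kscomma_cubicE.
have a_ge1 : 1 <= (s - 1)%:R :> rat by rewrite ler1n; lia.
have b_ge1 : 1 <= (t - 1)%:R :> rat by rewrite ler1n; lia.
have ab_ge3 : 3 <= (s - 1)%:R + (t - 1)%:R :> rat by rewrite -natrD ler_nat; lia.
by split; apply: ltr0_neq0; rewrite ?expr1n; nra.
Qed.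

Lemma Ksplus_quartic_nroot s t : (2 <= s)%N -> (2 <= t)%N ->
  let q := Ksplus_quartic (s - 1)%:R (t - 1)%:R in ~~ root q 1 /\ ~~ root q 2.
Proof.
move=> s_ge2 t_ge2 /=; rewrite /root !Ksplus_quarticE.
have a_ge1 : 1 <= (s - 1)%:R :> rat by rewrite ler1n; lia.
have b_ge1 : 1 <= (t - 1)%:R :> rat by rewrite ler1n; lia.
by split; [apply: lt0r_neq0 | apply: ltr0_neq0]; rewrite ?expr1n; nra.
Qed.

Lemma sum_prod_eq {R : realFieldType} (a b a' b' : R) :
  a + b = a' + b' -> a * b = a' * b' -> (a = a' /\ b = b') \/ (a = b' /\ b = a').
Proof.
move=> sumE prodE; have bE : b = a' + b' - a by lra.
have : (a - a') * (a - b') == 0 by apply/eqP; rewrite bE in prodE; nra.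
by rewrite mulf_eq0 => /orP[] /eqP h; [left|right]; lra.
Qed.

Lemma Kh_poly_inj h n h' n' :
  (3 <= h)%N -> (h <= n - 1)%N -> (3 <= h')%N -> (h' <= n' - 1)%N ->
  Kh_poly h n = Kh_poly h' n' -> h = h' /\ n = n'.
Proof.
move=> h_ge3 h_le h'_ge3 h'_le.
have [r1 r2] := @Kh_cubic_nroot h n h_ge3 h_le.
have [r1' r2'] := @Kh_cubic_nroot h' n' h'_ge3 h'_le.
by case/dpoly_inj => // AE BE _; lia.
Qed.

Lemma natr_inj : injective (fun n : nat => n%:R : rat).
Proof. exact: mulrIn (oner_neq0 _). Qed.

Lemma natr_sum_eq (a b a' b' : nat) : (a + b = a' + b')%N ->
  a%:R + b%:R = a'%:R + b'%:R :> rat.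
Proof. by rewrite -!natrD => ->. Qed.

Lemma Kscomma_poly_inj s t s' t' : (2 <= s)%N -> (2 <= t)%N -> (2 <= s')%N -> (2 <= t')%N ->
  (s + t - 1 = s' + t' - 1)%N -> Kscomma_poly s t = Kscomma_poly s' t' ->
  (s = s' /\ t = t') \/ (s = t' /\ t = s').
Proof.
move=> s_ge2 t_ge2 s'_ge2 t'_ge2 n_eq.
have [st_le4|st_ge5] := leqP (s + t) 4; first by left; lia.
have st'_ge5 : (5 <= s' + t')%N by lia.
have [r1 r2] := @Kscomma_cubic_nroot s t s_ge2 t_ge2 st_ge5.
have [r1' r2'] := @Kscomma_cubic_nroot s' t' s'_ge2 t'_ge2 st'_ge5.
case/dpoly_inj => // _ _ /(congr1 (horner^~ 0)); rewrite !Kscomma_cubicE => q0E.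
have sumE : (s - 1)%:R + (t - 1)%:R = (s' - 1)%:R + (t' - 1)%:R :> rat.
  by apply: natr_sum_eq; lia.
have prodE : (s - 1)%:R * (t - 1)%:R = (s' - 1)%:R * (t' - 1)%:R :> rat by lra.
by have [[/natr_inj sE /natr_inj tE]|[/natr_inj sE /natr_inj tE]] :=
  sum_prod_eq _ _ _ _ sumE prodE; [left | right]; lia.
Qed.

Lemma Ksplus_poly_inj s t s' t' : (2 <= s)%N -> (2 <= t)%N -> (2 <= s')%N -> (2 <= t')%N ->
  Ksplus_poly s t = Ksplus_poly s' t' -> (s = s' /\ t = t') \/ (s = t' /\ t = s').
Proof.
move=> s_ge2 t_ge2 s'_ge2 t'_ge2.
have [r1 r2] := @Ksplus_quartic_nroot s t s_ge2 t_ge2.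
have [r1' r2'] := @Ksplus_quartic_nroot s' t' s'_ge2 t'_ge2.
case/dpoly_inj => // n_eq _ /(congr1 (horner^~ 0)); rewrite !Ksplus_quarticE => q0E.
have sumE : (s - 1)%:R + (t - 1)%:R = (s' - 1)%:R + (t' - 1)%:R :> rat.
  by apply: natr_sum_eq; lia.
have prodE : (s - 1)%:R * (t - 1)%:R = (s' - 1)%:R * (t' - 1)%:R :> rat by lra.
by have [[/natr_inj sE /natr_inj tE]|[/natr_inj sE /natr_inj tE]] :=
  sum_prod_eq _ _ _ _ sumE prodE; [left | right]; lia.
Qed.

Lemma Kh_poly_neq_Ksplus_poly h n s t :
  (3 <= h)%N -> (h <= n - 1)%N -> (2 <= s)%N -> (2 <= t)%N ->
  n = (s + t)%N -> Kh_poly h n <> Ksplus_poly s t.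
Proof.
move=> h_ge3 h_le s_ge2 t_ge2 n_eq.
have [r1 r2] := @Kh_cubic_nroot h n h_ge3 h_le.
have [r1' r2'] := @Ksplus_quartic_nroot s t s_ge2 t_ge2.
by case/dpoly_inj => // AE BE _; lia.
Qed.

Lemma Kscomma_poly_neq_Ksplus_poly s t s' t' :
  (2 <= s)%N -> (2 <= t)%N -> (2 <= s')%N -> (2 <= t')%N ->
  (s + t - 1 = s' + t')%N -> Kscomma_poly s t <> Ksplus_poly s' t'.
Proof.
move=> s_ge2 t_ge2 s'_ge2 t'_ge2 n_eq.
have st_ge5 : (5 <= s + t)%N by lia.
have [r1 r2] := @Kscomma_cubic_nroot s t s_ge2 t_ge2 st_ge5.
have [r1' r2'] := @Ksplus_quartic_nroot s' t' s'_ge2 t'_ge2.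
by case/dpoly_inj => // AE _ _; lia.
Qed.

Lemma Kh_poly_eq_Kscomma_poly h n s t :
  (3 <= h)%N -> (h <= n - 1)%N -> (2 <= s)%N -> (2 <= t)%N ->
  n = (s + t - 1)%N -> Kh_poly h n = Kscomma_poly s t ->
  h = (n - 1)%N /\ (s = (n - 1)%N /\ t = 2%N \/ s = 2%N /\ t = (n - 1)%N).
Proof.
move=> h_ge3 h_le s_ge2 t_ge2 n_eq.
have st_ge5 : (5 <= s + t)%N by lia.
have [r1 r2] := @Kh_cubic_nroot h n h_ge3 h_le.
have [r1' r2'] := @Kscomma_cubic_nroot s t s_ge2 t_ge2 st_ge5.
case/dpoly_inj => // AE BE /(congr1 (horner^~ 0)); rewrite Kh_cubicE Kscomma_cubicE => q0E.
have b1 : (n - h)%:R = 1 :> rat by rewrite (_ : n - h = 1)%N //; lia.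
have aE : (h - 1)%:R + 1 = (s - 1)%:R + (t - 1)%:R :> rat.
  by rewrite natr1 -natrD; congr _%:R; lia.
have : ((s - 1)%:R - 1) * ((t - 1)%:R - 1) == 0 :> rat.
  by apply/eqP; rewrite b1 in q0E; nra.
by rewrite mulf_eq0 !subr_eq0 -[1]/(1%:R) => /orP[] /eqP/natr_inj; lia.
Qed.

Theorem corollary2p8 (G1 G2 : sgraph) :
  in_families G1 -> in_families G2 -> D_cospectral G1 G2 -> isomorphic G1 G2.
Proof.
move=> F1 F2 /D_cospectral_char_polyN[].
case: F1 => [[h [n [h3 [hn ->]]]] | [[s [t [s2 [t2 ->]]]] | [s [t [s2 [t2 ->]]]]]];
case: F2 => [[h' [n' [h3' [hn' ->]]]] | [[s' [t' [s2' [t2' ->]]]] | [s' [t' [s2' [t2' ->]]]]]] /=.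
- rewrite char_polyN_Kh // char_polyN_Kh // => _ /Kh_poly_inj[] // -> ->.
  exact: isomorphic_refl.
- by rewrite char_polyN_Kh // char_polyN_Ksplus // => nE /Kh_poly_neq_Ksplus_poly[].
- rewrite char_polyN_Kh // char_polyN_Kscomma // => nE /Kh_poly_eq_Kscomma_poly[] // -> st.
  by apply: isomorphic_Kh_Kscomma => //; lia.
- by rewrite char_polyN_Ksplus // char_polyN_Kh // => nE /esym /Kh_poly_neq_Ksplus_poly[].
- rewrite char_polyN_Ksplus // char_polyN_Ksplus // => _ /Ksplus_poly_inj[] // [-> ->].
    exact: isomorphic_refl.
  exact: Ksplus_sym.
- rewrite char_polyN_Ksplus // char_polyN_Kscomma // => nE /esym.
  by move=> /Kscomma_poly_neq_Ksplus_poly[].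
- rewrite char_polyN_Kscomma // char_polyN_Kh // => nE /esym.
  move=> /Kh_poly_eq_Kscomma_poly[] // -> st.
  by apply/isomorphic_sym/isomorphic_Kh_Kscomma => //; lia.
- by rewrite char_polyN_Kscomma // char_polyN_Ksplus // => nE /Kscomma_poly_neq_Ksplus_poly[].
- rewrite char_polyN_Kscomma // char_polyN_Kscomma // => nE /Kscomma_poly_inj[] // [-> ->].
    exact: isomorphic_refl.
  exact: Kscomma_sym.
Qed.
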